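(* If $C^1$ and $C^2$ are non-empty cliques of $G$, then $|C^1|<|C^2|$ if and only if $f(\mathbf{x}(C^1))<f(\mathbf{x}(C^2))$.
   Context: Let $G=(\mathcal{V},\mathcal{E})$ be a simple undirected graph on vertex set $\mathcal{V}=\{1,\dots,n\}$ with adjacency matrix $\mathbf{A}=(a_{ij})$ ($a_{ij}=1$ if $(i,j)\in\mathcal{E}$, else $0$; $a_{ii}=0$). A clique is a subset $C\subseteq\mathcal{V}$ with $(i,j)\in\mathcal{E}$ for all distinct $i,j\in C$. Let $\Delta=\{\mathbf{x}\in\mathbb{R}^n:\mathbf{0}\le\mathbf{x}\le\mathbf{1},\ \mathbf{1}^{\mathsf T}\mathbf{x}=1\}$. For a non-empty clique $C$, $\mathbf{x}(C)\in\Delta$ has $x(C)_i=1/|C|$ for $i\in C$ and $0$ otherwise. For $\mathbf{x}\in\Delta$, $\mathcal{P}(\mathbf{x})$ is the set of vectors in $\Delta$ obtained by permuting the coordinates of $\mathbf{x}$. Let $\Phi:X\to\mathbb{R}$ be twice continuously differentiable on an open set $X\supset\Delta$, satisfying for every $\mathbf{x}\in\Delta$: (C1) $\nabla^2\Phi(\mathbf{x})$ is positive semidefinite; (C2) $\|\nabla^2\Phi(\mathbf{x})\|_2<2$; (C3) $\Phi$ is constant on $\mathcal{P}(\mathbf{x})$. Define $f(\mathbf{x})=\mathbf{x}^{\mathsf T}\mathbf{A}\mathbf{x}+\Phi(\mathbf{x})$. *)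

From mathcomp Require Import all_boot all_order all_algebra all_fingroup.
From mathcomp Require Import all_classical all_reals all_analysis.
Import Order.TTheory GRing.Theory Num.Theory.
Import numFieldNormedType.Exports.
Set Implicit Arguments. Unset Strict Implicit. Unset Printing Implicit Defensive.
Local Open Scope ring_scope.
Local Open Scope classical_set_scope.

Section Defs.
Variables (R : realType) (n : nat).

Definition simple_graph (adj : rel 'I_n) : Prop :=
  (forall i j, adj i j = adj j i) /\ (forall i, ~~ adj i i).

Definition adjmx (adj : rel 'I_n) : 'M[R]_n := \matrix_(i, j) (adj i j)%:R.

Definition is_clique (adj : rel 'I_n) (C : {set 'I_n}) : Prop :=
  forall i j, i \in C -> j \in C -> i != j -> adj i j.

Definition simplex : set 'rV[R]_n :=
  [set x | (forall i, 0 <= x 0 i <= 1) /\ \sum_i x 0 i = 1].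

Definition charvec (C : {set 'I_n}) : 'rV[R]_n :=
  \row_i (if i \in C then (#|C|%:R)^-1 else 0).

Definition ebasis (i : 'I_n) : 'rV[R]_n := delta_mx 0 i.

Definition C2_on (Phi : 'rV[R]_n -> R) (X : set 'rV[R]_n) : Prop :=
  {within X, continuous Phi} /\
  (forall i, (forall x, X x -> derivable Phi x (ebasis i)) /\
             {within X, continuous ('D_(ebasis i) Phi)}) /\
  (forall i j, (forall x, X x -> derivable ('D_(ebasis j) Phi) x (ebasis i)) /\
               {within X, continuous ('D_(ebasis i) ('D_(ebasis j) Phi))}).

Definition hessian (Phi : 'rV[R]_n -> R) (x : 'rV[R]_n) : 'M[R]_n :=
  \matrix_(i, j) ('D_(ebasis i) ('D_(ebasis j) Phi)) x.

Definition psd (M : 'M[R]_n) : Prop :=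
  forall v : 'rV[R]_n, 0 <= (v *m M *m v^T) 0 0.

Definition sqnorm2 (v : 'rV[R]_n) : R := \sum_i v 0 i ^+ 2.

(* ||M||_2 < c : the operator norm induced by the Euclidean norm,
   sup_{v <> 0} ||M v||_2 / ||v||_2, is strictly less than c
   (i.e. some c' < c bounds the ratio) *)
Definition spectral_norm_lt (M : 'M[R]_n) (c : R) : Prop :=
  exists2 c', c' < c & forall v : 'cV[R]_n,
    Num.sqrt (sqnorm2 (M *m v)^T) <= c' * Num.sqrt (sqnorm2 v^T).

Definition permvec (s : {perm 'I_n}) (x : 'rV[R]_n) : 'rV[R]_n := \row_i x 0 (s i).

Definition fobj (adj : rel 'I_n) (Phi : 'rV[R]_n -> R) (x : 'rV[R]_n) : R :=
  (x *m adjmx adj *m x^T) 0 0 + Phi x.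

End Defs.

(* On a clique C the quadratic part is x(C)^T A x(C) = 1 - 1/|C|, and by the
   permutation invariance (C3) Phi(x(C)) depends only on |C|; so it suffices
   that h(C) = Phi(x(C)) - 1/|C| increases strictly with |C|.  Removing a
   vertex k from a set D moves x(D) by d_k = x(D \ k) - x(D), where
   ||d_k||^2 = 1/(|D|-1) - 1/|D|.  As ||Hess Phi|| < 2 on the simplex, Taylor's
   formula along the segment gives
   Phi(x(D \ k)) - Phi(x(D)) < grad Phi(x(D)) . d_k + ||d_k||^2,
   and the d_k sum to zero over k in D; averaging over k gives
   h(D \ k) < h(D). *)

From mathcomp Require Import all_boot all_order all_algebra all_fingroup.
From mathcomp Require Import all_classical all_reals all_analysis.
From mathcomp Require Import ring lra zify.
Import Order.TTheory GRing.Theory Num.Theory.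
Import numFieldNormedType.Exports.
Local Open Scope ring_scope.
Local Open Scope classical_set_scope.

Section RealMeanValue.
Context {R : realType}.

Lemma MVT_in (f df : R -> R) (a b : R) : a < b ->
  {in `[a, b]%R, forall x : R, is_derive x 1 f (df x)} ->
  exists2 c, c \in `]a, b[%R & f b - f a = df c * (b - a).
Proof.
move=> ab fdf; apply: MVT => // [x xab|].
  by apply: fdf; apply: subitvP xab; rewrite subitvE !bnd_simp.
by apply: derivable_within_continuous => x /fdf [].
Qed.

Lemma mean_value_le (f df : R -> R) (c L eps : R) :
  (forall s : R, `|s| <= `|c| -> is_derive s 1 f (df s)) ->
  (forall s : R, `|s| <= `|c| -> `|df s - L| <= eps) ->
  `|f c - f 0 - c * L| <= `|c| * eps.
Proof.
move=> fdf dfL.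
suff [s sc ->] : exists2 s, `|s| <= `|c| & f c - f 0 = c * df s.
  by rewrite -mulrBr normrM ler_wpM2l // dfL.
have [c0|c0|->] := ltgtP c 0; last by exists 0; rewrite ?subrr ?mul0r.
- have [x|s] := @MVT_in f df c 0 c0.
    by move=> /[!in_itv] /= /andP[? ?]; apply: fdf; rewrite !ler0_norm //; lra.
  move=> /[!in_itv] /= /andP[? ?] E; exists s; first by rewrite !ler0_norm //; lra.
  by rewrite -opprB E sub0r mulrN opprK mulrC.
- have [x|s] := @MVT_in f df 0 c c0.
    by move=> /[!in_itv] /= /andP[? ?]; apply: fdf; rewrite !ger0_norm //; lra.
  move=> /[!in_itv] /= /andP[? ?] E; exists s; first by rewrite !ger0_norm //; lra.
  by rewrite E subr0 mulrC.
Qed.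

Lemma taylor2_lt (f f' f'' : R -> R) (S : R) :
  {in `[0, 1]%R, forall t : R, is_derive t 1 f (f' t)} ->
  {in `[0, 1]%R, forall t : R, is_derive t 1 f' (f'' t)} ->
  {in `[0, 1]%R, forall t : R, f'' t < 2 * S} ->
  f 1 - f 0 - f' 0 < S.
Proof.
move=> ff' f'f'' f''S.
(* [psi] is strictly concave on [0, 1], so [psi 1 - psi 0 < psi' 0]. *)
pose psi t := f t - S * (t * t).
pose psi' t := f' t - S * (t + t).
have psi_psi' : {in `[0, 1]%R, forall t : R, is_derive t 1 psi (psi' t)}.
  move=> t /ff' ft; apply: (is_deriveB ft).
  have := is_deriveZ S (is_deriveM (is_derive_id t 1) (is_derive_id t 1)).
  by rewrite !scaler1.
have psi'_psi'' : {in `[0, 1]%R, forall t : R, is_derive t 1 psi' (f'' t - S * 2)}.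
  by move=> t /f'f'' ft; apply: is_deriveB.
have [c /[!in_itv] /= /andP[c0 c1] Ec] := @MVT_in psi psi' 0 1 ltr01 psi_psi'.
have [x /[!in_itv] /= /andP[? ?]|xi /[!in_itv] /= /andP[xi0 xic] Exi] :=
  @MVT_in psi' (fun t => f'' t - S * 2) 0 c c0.
  by apply: psi'_psi''; rewrite in_itv /=; apply/andP; split; lra.
have /f''S xiS : xi \in `[0, 1]%R by rewrite in_itv /=; apply/andP; split; lra.
move: Ec Exi; rewrite /psi /psi' !mulr0 !mulr1 !addr0 !subr0.
nra.
Qed.

End RealMeanValue.

Section Partials.
Context {R : realType} {n : nat}.
Local Notation V := 'rV[R]_n.

Lemma is_derive_line (g : V -> R) (y w : V) (t : R) :
  derivable g (y + t *: w) w ->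
  is_derive t 1 (fun s => g (y + s *: w)) ('D_w g (y + t *: w)).
Proof.
move=> dg.
have E : (fun h : R => h^-1 *: (((fun s => g (y + s *: w)) \o shift t) (h *: 1)
                                 - g (y + t *: w)))
       = (fun h : R => h^-1 *: ((g \o shift (y + t *: w)) (h *: w) - g (y + t *: w))).
  by apply/funext => h /=; rewrite scaler1 scalerDl addrCA addrA.
by split; [rewrite /derivable E | rewrite /derive E].
Qed.

Definition row_prefix (k : nat) (v : V) : V := \row_i (if (i < k)%N then v 0 i else 0).

Lemma row_prefix0 (v : V) : row_prefix 0 v = 0.
Proof. by apply/rowP => i; rewrite !mxE. Qed.

Lemma row_prefix_full (v : V) : row_prefix n v = v.
Proof. by apply/rowP => i; rewrite mxE ltn_ord. Qed.

Lemma row_prefixS (k : 'I_n) (v : V) :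
  row_prefix k.+1 v = row_prefix k v + v 0 k *: ebasis R k.
Proof.
apply/rowP => i; rewrite /ebasis !mxE ltnS leq_eqVlt val_eqE eqxx /=.
by case: eqVneq => [->|_]; rewrite ?ltnn ?mulr1 ?add0r ?mulr0 ?addr0.
Qed.

Lemma ball_row (a z : V) (d : R) :
  0 < d -> (forall i, `|a 0 i - z 0 i| < d) -> ball a d z.
Proof. by move=> d0 adz; split=> // i j; rewrite (ord1 i); apply: adz. Qed.

(* Walk from [a] to [a + h v] one coordinate at a time and apply the mean
   value inequality on each axis-parallel step. *)
Lemma increment_le_partials (g : V -> R) (G : 'I_n -> R) (a v : V) (d eps h : R) :
  0 < d ->
  (forall z, ball a d z -> forall i,
     derivable g z (ebasis R i) /\ `|'D_(ebasis R i) g z - G i| <= eps) ->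
  (forall i, `|h * v 0 i| < d) ->
  `|g (a + h *: v) - g a - h * \sum_i v 0 i * G i|
    <= `|h| * (\sum_i `|v 0 i|) * eps.
Proof.
move=> d0 gG hv.
have step (k : 'I_n) : `|g (a + h *: row_prefix k.+1 v) - g (a + h *: row_prefix k v)
                - h * v 0 k * G k| <= `|h * v 0 k| * eps.
  set y := a + h *: row_prefix k v.
  have -> : a + h *: row_prefix k.+1 v = y + (h * v 0 k) *: ebasis R k.
    by rewrite row_prefixS scalerDr addrA scalerA.
  have yB s : `|s| <= `|h * v 0 k| -> ball a d (y + s *: ebasis R k).
    move=> sh; apply: ball_row => // i; rewrite !mxE /=.
    rewrite -addrA opprD addrA subrr sub0r normrN.
    case: (eqVneq i k) => [->|ik]; first by rewrite ltnn mulr0 add0r mulr1 (le_lt_trans sh).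
    rewrite mulr0 addr0; case: ifP => _; last by rewrite mulr0 normr0.
    exact: hv.
  have := @mean_value_le R (fun s => g (y + s *: ebasis R k))
    (fun s => 'D_(ebasis R k) g (y + s *: ebasis R k)) (h * v 0 k) (G k) eps.
  rewrite scale0r addr0; apply=> s /yB /gG /(_ k) [// gd _].
  exact: is_derive_line.
have -> : g (a + h *: v) - g a = \sum_(k < n)
    (g (a + h *: row_prefix k.+1 v) - g (a + h *: row_prefix k v)).
  rewrite -(big_mkord xpredT (fun k => g (a + h *: row_prefix k.+1 v)
                                      - g (a + h *: row_prefix k v))).
  by rewrite telescope_sumr // row_prefix_full row_prefix0 scaler0 addr0.
rewrite mulr_sumr -sumrB (le_trans (ler_norm_sum _ _ _)) //.
rewrite mulr_sumr mulr_suml; apply: ler_sum => k _.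
by rewrite mulrA -normrM step.
Qed.

Lemma is_derive_partials (g : V -> R) (X : set V) (a v : V) :
  open X -> X a ->
  (forall x, X x -> forall i, derivable g x (ebasis R i)) ->
  (forall i, {within X, continuous ('D_(ebasis R i) g)}) ->
  is_derive a v g (\sum_i v 0 i * 'D_(ebasis R i) g a).
Proof.
move=> oX Xa gd gc; set L := \sum_i _.
suff qL : (fun h : R => h^-1 *: ((g \o shift a) (h *: v) - g a)) @ 0^' --> L.
  by split; [apply/cvg_ex; exists L | exact: cvg_lim].
apply/cvgrPdist_le => eps eps0.
pose M := \sum_i `|v 0 i| + 1.
have M0 : 0 < M by rewrite ltr_pwDr // sumr_ge0.
have Dnear i : \forall z \near a,
    `|'D_(ebasis R i) g z - 'D_(ebasis R i) g a| <= eps / M.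
  have := gc i; rewrite continuous_open_subspace // => /(_ a (mem_set Xa)).
  move=> /cvgrPdist_le /(_ _ (divr_gt0 eps0 M0)).
  by apply: filterS => z; rewrite distrC.
have near_a : \forall z \near a, X z /\
    forall i, `|'D_(ebasis R i) g z - 'D_(ebasis R i) g a| <= eps / M.
  apply: filterS2 (open_nbhs_nbhs (conj oX Xa)) (filter_forall _ Dnear).
  by move=> z Xz Dz; split.
have [d d0 dB] := (nbhs_ballP _ _).1 near_a.
rewrite near_withinE; apply/nbhs_ballP; exists (d / M); first exact: divr_gt0.
move=> h /=; rewrite -ball_normE /= sub0r normrN ltr_pdivlMr // => hd h0.
have hv i : `|h * v 0 i| < d.
  rewrite normrM (le_lt_trans _ hd) // ler_wpM2l // /M (bigD1 i) //=.
  by rewrite -addrA lerDl addr_ge0 // sumr_ge0.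
have gB z : ball a d z -> forall i, derivable g z (ebasis R i) /\
    `|'D_(ebasis R i) g z - 'D_(ebasis R i) g a| <= eps / M.
  by move=> /dB [Xz gz] i; split; [exact: gd | exact: gz].
have := @increment_le_partials g _ a v d (eps / M) h d0 gB hv; rewrite -/L.
have -> : L - h^-1 *: (g (h *: v + a) - g a) = - h^-1 * (g (a + h *: v) - g a - h * L).
  by rewrite [h *: v + a]addrC -[h^-1 *: _]/(h^-1 * _); field.
move=> incr; rewrite normrM normrN normfV ler_pdivrMl ?normr_gt0 //.
apply: le_trans incr _; rewrite -mulrA ler_pM2l ?normr_gt0 //.
by rewrite mulrA ler_pdivrMr // mulrC ler_pM2l // /M ltW // ltrDl.
Qed.

End Partials.

Section SecondOrder.
Context {R : realType} {n : nat}.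
Local Notation V := 'rV[R]_n.

Lemma is_derive_line_partials (g : V -> R) (X : set V) (p d : V) (t : R) :
  open X -> X (p + t *: d) ->
  (forall x, X x -> forall i, derivable g x (ebasis R i)) ->
  (forall i, {within X, continuous ('D_(ebasis R i) g)}) ->
  is_derive t 1 (fun s => g (p + s *: d))
    (\sum_i d 0 i * 'D_(ebasis R i) g (p + t *: d)).
Proof.
move=> oX Xp gd gc; have [dv <-] := is_derive_partials g X (p + t *: d) d oX Xp gd gc.
exact: is_derive_line.
Qed.

Lemma mx_quad_formE (M : 'M[R]_n) (v : V) :
  (v *m M *m v^T) 0 0 = \sum_i v 0 i * \sum_j v 0 j * M j i.
Proof. by rewrite mxE; apply: eq_bigr => i _; rewrite !mxE mulrC. Qed.

Lemma C2_taylor_lt (Phi : V -> R) (X : set V) (p d : V) :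
  open X -> C2_on Phi X ->
  {in `[0, 1]%R, forall t : R, X (p + t *: d)} ->
  {in `[0, 1]%R, forall t : R,
     (d *m hessian Phi (p + t *: d) *m d^T) 0 0 < 2 * sqnorm2 d} ->
  Phi (p + d) - Phi p - \sum_i d 0 i * 'D_(ebasis R i) Phi p < sqnorm2 d.
Proof.
move=> oX [_ [D1 D2]] Xseg Hd.
have := @taylor2_lt R (fun s => Phi (p + s *: d))
  (fun s => \sum_i d 0 i * 'D_(ebasis R i) Phi (p + s *: d))
  (fun s => (d *m hessian Phi (p + s *: d) *m d^T) 0 0) (sqnorm2 d).
rewrite scale1r scale0r addr0; apply=> // t /Xseg Xt.
  exact: is_derive_line_partials Xt (fun x Xx i => (D1 i).1 x Xx) (fun i => (D1 i).2).
rewrite mx_quad_formE -fct_sumE; apply: is_derive_sum => i.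
rewrite (eq_bigr (fun j => d 0 j * 'D_(ebasis R j) ('D_(ebasis R i) Phi) (p + t *: d))).
  apply: is_deriveZ.
  exact: is_derive_line_partials Xt (fun x Xx j => (D2 j i).1 x Xx) (fun j => (D2 j i).2).
by move=> j _; rewrite mxE.
Qed.

End SecondOrder.

Lemma mx_quad_form_lt2 {R : realType} {n : nat} (M : 'M[R]_n) (v : 'rV[R]_n) :
  spectral_norm_lt M 2 -> 0 < sqnorm2 v -> (v *m M *m v^T) 0 0 < 2 * sqnorm2 v.
Proof.
move=> [c c2 Mc] v0; set S := sqnorm2 v; set W := sqnorm2 (M *m v^T)^T.
have sqrtWS : Num.sqrt W <= c * Num.sqrt S by have := Mc v^T; rewrite trmxK.
have W0 : 0 <= W by apply: sumr_ge0 => i _; apply: sqr_ge0.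
have c0 : 0 <= c.
  by have := le_trans (sqrtr_ge0 W) sqrtWS; rewrite pmulr_lge0 // sqrtr_gt0.
have WS : W <= c ^+ 2 * S.
  have := ler_pM (sqrtr_ge0 W) (sqrtr_ge0 W) sqrtWS sqrtWS.
  by rewrite -expr2 sqr_sqrtr // mulrACA -!expr2 sqr_sqrtr // ltW.
(* AM-GM, coordinatewise: [a b <= a^2 + b^2 / 4] *)
have amgm : (v *m M *m v^T) 0 0 <= S + W / 4.
  rewrite -mulmxA mxE /S /W /sqnorm2 mulr_suml -big_split /=.
  apply: ler_sum => j _; rewrite [(M *m v^T)^T 0 j]mxE.
  by have := sqr_ge0 (2 * v 0 j - (M *m v^T) j 0); nra.
have : c ^+ 2 * S < 4 * S by rewrite ltr_pM2r // -subr_gt0; nra.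
lra.
Qed.

Lemma card_setD1 (T : finType) (D : {set T}) (j : T) : j \in D -> #|D :\ j| = #|D|.-1.
Proof. by move=> jD; rewrite (cardsD1 j D) jD. Qed.

Section CharacteristicVectors.
Context {R : realType} {n : nat}.
Local Notation V := 'rV[R]_n.
Implicit Types (A B C D : {set 'I_n}).

Lemma charvecE C i : charvec R C 0 i = if i \in C then #|C|%:R^-1 else 0.
Proof. by rewrite mxE. Qed.

Lemma card_neq0 C : C != finset.set0 -> (#|C|%:R : R) != 0.
Proof. by rewrite pnatr_eq0 -lt0n card_gt0. Qed.

Lemma sum_charvec C : C != finset.set0 -> \sum_i charvec R C 0 i = 1.
Proof.
move=> C0; under eq_bigr do rewrite charvecE.
by rewrite -big_mkcond sumr_const -(mulr_natr #|C|%:R^-1) mulVf // card_neq0.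
Qed.

Lemma sum_charvecM A B : A \subset B -> A != finset.set0 ->
  \sum_i charvec R A 0 i * charvec R B 0 i = #|B|%:R^-1.
Proof.
move=> AB A0; rewrite (eq_bigr (fun i => if i \in A then #|A|%:R^-1 * #|B|%:R^-1 else 0)).
  by rewrite -big_mkcond sumr_const -(mulr_natr (_ * _)) mulrAC mulVf ?mul1r // card_neq0.
move=> i _; rewrite !charvecE; case: ifP => iA; last by rewrite mul0r.
by rewrite (fintype.subsetP AB i iA).
Qed.

Lemma charvec_simplex C : C != finset.set0 -> simplex (charvec R C).
Proof.
move=> C0; split; last exact: sum_charvec.
move=> i; rewrite charvecE; case: ifP => _; last by rewrite lexx ler01.
have C1 : 1 <= (#|C|%:R : R) by rewrite ler1n card_gt0.
by rewrite invr_ge0 (le_trans ler01) //= invf_le1 // (lt_le_trans ltr01).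
Qed.

Lemma simplex_segment (x y : V) (t : R) : simplex x -> simplex y -> 0 <= t <= 1 ->
  simplex (x + t *: (y - x)).
Proof.
move=> [x01 sx] [y01 sy] /andP[t0 t1]; split.
  move=> i; rewrite !mxE; have /andP[? ?] := x01 i; have /andP[? ?] := y01 i.
  by apply/andP; split; nra.
under eq_bigr do rewrite !mxE.
by rewrite big_split /= -mulr_sumr sumrB sx sy subrr mulr0 addr0.
Qed.

Lemma sqnorm2_charvecB A B : A \subset B -> A != finset.set0 ->
  sqnorm2 (charvec R A - charvec R B) = #|A|%:R^-1 - #|B|%:R^-1.
Proof.
move=> AB A0; have B0 : B != finset.set0.
  by apply: contraNneq A0 => B0; rewrite -finset.subset0 -B0.
have -> : sqnorm2 (charvec R A - charvec R B) =
    \sum_i charvec R A 0 i * charvec R A 0 i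
    - 2 * \sum_i charvec R A 0 i * charvec R B 0 i
    + \sum_i charvec R B 0 i * charvec R B 0 i.
  rewrite mulr_sumr -sumrB -big_split /=; apply: eq_bigr => i _.
  by rewrite !mxE; ring.
by rewrite !sum_charvecM //; ring.
Qed.

Lemma sum_charvec_setD1 D : (1 < #|D|)%N ->
  \sum_(j in D) (charvec R (D :\ j) - charvec R D) = 0.
Proof.
move=> D1; apply/rowP => i; rewrite summxE [RHS]mxE.
under eq_bigr do rewrite !mxE.
rewrite sumrB; apply/eqP; rewrite subr_eq0; apply/eqP.
case: (boolP (i \in D)) => iD; last first.
  by rewrite !big1 // => j _; rewrite ?in_setD1 (negbTE iD) ?andbF.
rewrite (big_setD1 i) //= setD11 add0r.
rewrite (eq_bigr (fun _ => #|D|.-1%:R^-1)); last first.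
  by move=> j; rewrite in_setD1 => /andP[ji jD]; rewrite in_setD1 eq_sym ji iD card_setD1.
have Dn0 : (#|D|.-1%:R : R) != 0 by rewrite pnatr_eq0; lia.
rewrite !sumr_const card_setD1 // -(mulr_natr #|D|.-1%:R^-1) -(mulr_natr #|D|%:R^-1).
by rewrite !mulVf // pnatr_eq0; lia.
Qed.

End CharacteristicVectors.

Lemma permvec_charvec {R : realType} {n : nat} (s : {perm 'I_n}) (C : {set 'I_n}) :
  permvec s (charvec R C) = charvec R (s @^-1: C).
Proof. by apply/rowP => k; rewrite !mxE inE card_preimset //; apply: perm_inj. Qed.

Lemma charvec_card_invariant {R : realType} {n : nat} (Phi : 'rV[R]_n -> R) :
  (forall x, simplex x -> forall s : {perm 'I_n}, Phi (permvec s x) = Phi x) ->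
  forall C C' : {set 'I_n}, C != finset.set0 -> #|C| = #|C'| ->
  Phi (charvec R C) = Phi (charvec R C').
Proof.
move=> Phi_perm C C'; move: {2}#|C :\: C'| (erefl #|C :\: C'|) => m.
elim: m C => [|m IH] C CC' C0 card_eq.
  have CsubC' : C \subset C' by rewrite -finset.setD_eq0 -cards_eq0 CC'.
  by have /eqP -> : C == C' by rewrite eqEcard CsubC' card_eq leqnn.
have [i] : exists i, i \in C :\: C' by apply/card_gt0P; rewrite CC'.
have [j] : exists j, j \in C' :\: C.
  by apply/card_gt0P; rewrite cardsD finset.setIC -card_eq -cardsD CC'.
rewrite !inE => /andP[jC jC'] /andP[iC' iC].
have CC'_i : #|C :\: C' :\ i| = m by rewrite card_setD1 ?CC' // !inE iC iC'.
rewrite -(Phi_perm _ (charvec_simplex C C0) (tperm i j)) permvec_charvec.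
apply: IH; last by rewrite card_preimset //; apply: perm_inj.
- rewrite -CC'_i; apply: eq_card => k; rewrite !inE.
  by case: (tpermP i j k) => [->|->|/eqP ki /eqP kj]; rewrite ?eqxx ?(negbTE jC) ?jC' ?ki ?andbF.
- by rewrite -card_gt0 card_preimset ?card_gt0 //; apply: perm_inj.
Qed.

Lemma adjmxE {R : realType} {n : nat} (adj : rel 'I_n) i j :
  adjmx R adj i j = (adj i j)%:R.
Proof. by rewrite mxE. Qed.

Lemma charvec_clique_form {R : realType} {n : nat} (adj : rel 'I_n) (C : {set 'I_n}) :
  (forall i, ~~ adj i i) -> is_clique adj C -> C != finset.set0 ->
  (charvec R C *m adjmx R adj *m (charvec R C)^T) 0 0 = 1 - #|C|%:R^-1.
Proof.
move=> adj_irr clC C0; set x := charvec R C.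
have inner i : x 0 i * \sum_j x 0 j * adjmx R adj j i = x 0 i * (1 - x 0 i).
  case: (boolP (i \in C)) => iC; last by rewrite charvecE (negbTE iC) !mul0r.
  congr (_ * _); rewrite -(sum_charvec C C0) (bigD1 i) //= [in RHS](bigD1 i) //=.
  rewrite adjmxE (negbTE (adj_irr i)) mulr0 add0r addrAC subrr add0r.
  apply: eq_bigr => j ji; rewrite adjmxE charvecE.
  by case: ifP => jC; rewrite ?mul0r // clC // mulr1.
rewrite mx_quad_formE (eq_bigr _ (fun i _ => inner i)).
under eq_bigr do rewrite mulrBr mulr1.
by rewrite sumrB sum_charvec // sum_charvecM.
Qed.

Lemma setfun_card_mono {R : realDomainType} {T : finType} (h : {set T} -> R) :
  (forall A B : {set T}, A != finset.set0 -> #|A| = #|B| -> h A = h B) ->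
  (forall (D : {set T}) j, j \in D -> (1 < #|D|)%N -> h (D :\ j) < h D) ->
  forall A B : {set T}, A != finset.set0 -> B != finset.set0 ->
  (#|A| < #|B|)%N <-> h A < h B.
Proof.
move=> h_card h_setD1.
have lt_card m (A B : {set T}) : #|B| = m -> A != finset.set0 -> (#|A| < m)%N -> h A < h B.
  elim: m A B => // m IH A B Bm A0 Am.
  have [j jB] : exists j, j \in B by apply/card_gt0P; rewrite Bm.
  have Bj : #|B :\ j| = m by rewrite card_setD1 // Bm.
  have A1 : (0 < #|A|)%N by rewrite card_gt0.
  have step : h (B :\ j) < h B by apply: h_setD1; rewrite // Bm ltnS (leq_trans A1).
  case: (ltngtP #|A| m) => [Alt|Agt|Aeq].
  - exact: lt_trans (IH A (B :\ j) Bj A0 Alt) step.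
  - by rewrite ltnS leqNgt Agt in Am.
  - by rewrite (h_card A (B :\ j)) // Bj.
move=> A B A0 B0; split; first exact: lt_card.
move=> hAB; case: (ltngtP #|A| #|B|) => // [BA|AB].
- by have := lt_card _ B A erefl B0 BA; rewrite ltNge (ltW hAB).
- by move: hAB; rewrite (h_card A B) // ltxx.
Qed.

Section SymmetricPotential.
Context {R : realType} {n : nat}.
Variables (Phi : 'rV[R]_n -> R) (X : set 'rV[R]_n).
Hypotheses (X_open : open X) (simplex_sub : @simplex R n `<=` X) (Phi_C2 : C2_on Phi X).
Hypothesis Phi_hessian :
  forall x, simplex x -> spectral_norm_lt (hessian Phi x) 2.
Hypothesis Phi_perm :
  forall x, simplex x -> forall s : {perm 'I_n}, Phi (permvec s x) = Phi x.

Lemma Phi_charvec_setD1_lt (D : {set 'I_n}) j : j \in D -> (1 < #|D|)%N ->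
  Phi (charvec R (D :\ j)) - Phi (charvec R D) < #|D :\ j|%:R^-1 - #|D|%:R^-1.
Proof.
move=> jD D1; set xD := charvec R D; set r := #|D :\ j|%:R^-1 - #|D|%:R^-1.
have D0 : D != finset.set0 by rewrite -card_gt0 ltnW.
have cardDj : #|D :\ j| = #|D|.-1 by rewrite card_setD1.
have r_gt0 : 0 < r.
  rewrite /r cardDj subr_gt0 ltf_pV2 ?posrE ?ltr0n ?ltr_nat; lia.
pose lin (d : 'rV[R]_n) := \sum_i d 0 i * 'D_(ebasis R i) Phi xD.
have taylor k : k \in D ->
    Phi (charvec R (D :\ j)) - Phi xD - lin (charvec R (D :\ k) - xD) < r.
  move=> kD; set d := _ - xD.
  have Dk0 : D :\ k != finset.set0 by rewrite -card_gt0 card_setD1 //; lia.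
  have d_r : sqnorm2 d = r by rewrite sqnorm2_charvecB ?subD1set // /r !card_setD1.
  rewrite (charvec_card_invariant Phi Phi_perm (D :\ j) (D :\ k)); last 2 first.
  - by rewrite -card_gt0 cardDj; lia.
  - by rewrite !card_setD1.
  have -> : charvec R (D :\ k) = xD + d by rewrite /d addrC subrK.
  rewrite -d_r.
  apply: (C2_taylor_lt Phi X xD d X_open Phi_C2) => t /[!in_itv] /= t01.
    exact/simplex_sub/simplex_segment/t01/charvec_simplex/Dk0/charvec_simplex.
  apply: mx_quad_form_lt2; last by rewrite d_r.
  exact/Phi_hessian/simplex_segment/t01/charvec_simplex/Dk0/charvec_simplex.
have lin_sum : \sum_(k in D) lin (charvec R (D :\ k) - xD) = 0.
  rewrite exchange_big /= big1 // => i _.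
  by rewrite -mulr_suml -[X in X * _]summxE sum_charvec_setD1 // mxE mul0r.
have /ltr_sum /(_ taylor) : has (mem D) (index_enum 'I_n).
  by apply/hasP; exists j; rewrite ?mem_index_enum.
by rewrite sumrB lin_sum subr0 !sumr_const ltr_pMn2r ?card_gt0.
Qed.

End SymmetricPotential.

Theorem proposition3 (R : realType) (n : nat) (adj : rel 'I_n)
  (Phi : 'rV[R]_n -> R) (X : set 'rV[R]_n) :
  simple_graph adj ->
  open X -> @simplex R n `<=` X -> C2_on Phi X ->
  (forall x, @simplex R n x -> psd (hessian Phi x)) ->
  (forall x, @simplex R n x -> spectral_norm_lt (hessian Phi x) 2) ->
  (forall x, @simplex R n x -> forall s : {perm 'I_n}, Phi (permvec s x) = Phi x) ->
  forall C1 C2 : {set 'I_n},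
    C1 != finset.set0 -> C2 != finset.set0 -> is_clique adj C1 -> is_clique adj C2 ->
    ((#|C1| < #|C2|)%N <->
       fobj adj Phi (@charvec R n C1) < fobj adj Phi (@charvec R n C2)).
Proof.
move=> adj_simple X_open simplex_sub Phi_C2 _ Phi_hessian Phi_perm C1 C2 C10 C20 clC1 clC2.
pose h (C : {set 'I_n}) := Phi (charvec R C) - #|C|%:R^-1.
have fobjE C : C != finset.set0 -> is_clique adj C -> fobj adj Phi (charvec R C) = 1 + h C.
  by move=> C0 clC; rewrite /fobj (charvec_clique_form adj C adj_simple.2 clC C0) /h; ring.
rewrite !fobjE // ltrD2l; apply: setfun_card_mono => // [A B A0 AB | D j jD D1].
  by rewrite /h AB (charvec_card_invariant Phi Phi_perm A B).
have := Phi_charvec_setD1_lt Phi X X_open simplex_sub Phi_C2 Phi_hessian Phi_perm D j jD D1.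
rewrite /h; lra.
Qed.
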